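(* Let $P$ be a finite graded poset with $\hat0$ and let $\lambda$ be an ER-labeling of $P$ satisfying the rank two switching property, the braid relation and the cancellative property. Then the edge labeling $\lambda^*$ of $Q_\lambda(P)$ defined by $\lambda^*(X\lessdot Y)=S(Y)\setminus S(X)$ is an ER$^*$-labeling, i.e., every closed interval of $Q_\lambda(P)$ has exactly one ascent-free maximal chain.
   Context: An E-labeling is a map $\lambda$ from the cover relations of $P$ to a poset $\Lambda$. The word of labels of a saturated chain $x_0\lessdot\cdots\lessdot x_\ell$ is $\lambda(x_0\lessdot x_1)\cdots\lambda(x_{\ell-1}\lessdot x_\ell)$; the chain is increasing if the word is strictly increasing, ascent-free if no $i$ has $\lambda(x_{i-1}\lessdot x_i)<\lambda(x_i\lessdot x_{i+1})$. ER-labeling: every closed interval has exactly one increasing maximal chain. Rank two switching property: for every saturated chain $\hat0=x_0\lessdot\cdots\lessdot x_k$ and every $i$ with $\lambda(x_{i-1}\lessdot x_i)<\lambda(x_i\lessdot x_{i+1})$ there is a unique $x_i'$ with $x_{i-1}\lessdot x_i'\lessdot x_{i+1}$, $\lambda(x_{i-1}\lessdot x_i')=\lambda(x_i\lessdot x_{i+1})$, $\lambda(x_i'\lessdot x_{i+1})=\lambda(x_{i-1}\lessdot x_i)$. Quadratic exchange: for a maximal chain $\mathbf c$ of an interval with an ascent at position $i$, $U_i(\mathbf c)$ replaces $x_i$ by $x_i'$; otherwise $U_i(\mathbf c)=\mathbf c$. For maximal chains $\mathbf c_1,\mathbf c_2$ of an interval $[x,y]$ write $\mathbf c_1\sim_\lambda\mathbf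 c_2$ if they are connected by a sequence of quadratic exchanges (applied forwards or backwards) within $[x,y]$. Braid relation: for every maximal chain $\mathbf c$ of any interval with three strictly increasing consecutive labels at positions $i,i+1,i+2$, $U_iU_{i+1}U_i(\mathbf c)=U_{i+1}U_iU_{i+1}(\mathbf c)$. Cancellative property: for all $z<x<y$ in $P$, every maximal chain $\mathbf c$ of $[z,x]$ and maximal chains $\mathbf c_1,\mathbf c_2$ of $[x,y]$, $\mathbf c\cup\mathbf c_1\sim_\lambda\mathbf c\cup\mathbf c_2$ (in $[z,y]$) implies $\mathbf c_1\sim_\lambda\mathbf c_2$ (in $[x,y]$). $Q_\lambda(P)$: $C(P)$ is the set of saturated chains of $P$ starting at $\hat0$ ordered by inclusion; $e(\mathbf c)$ is the top element of $\mathbf c$. For $\mathbf c_1,\mathbf c_2\in C(P)$, $\mathbf c_1\sim\mathbf c_2$ iff $e(\mathbf c_1)=e(\mathbf c_2)=y$ and $\mathbf c_1\sim_\lambda\mathbf c_2$ in $[\hat0,y]$. $Q_\lambda(P)$ is the set of classes ordered by the transitive closure of: $X\le Y$ if some $\mathbf c\in X$, $\mathbf d\in Y$ satisfy $\mathbf c\subseteq\mathbf d$. All chains in a class $X$ have the same multiset $S(X)$ of labels (the multiset of labels of its cover relations), and if $X\lessdot Y$ then $S(Y)\setminus S(X)$ (multiset difference) consists of a single label. *)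

From mathcomp Require Import all_boot all_order.
From Stdlib Require Import Relations.
Set Implicit Arguments.
Unset Strict Implicit.
Unset Printing Implicit Defensive.
Import Order.Theory.
Local Open Scope order_scope.

(* Saturated chains x_0 <. x_1 <. ... <. x_l are represented by
   the sequence [:: x_0; ...; x_l] (consecutive elements related by covers). *)

Section ChainDefs.
Context {d : Order.disp_t} {P : finPOrderType d}.

Definition cover (x y : P) : bool :=
  (x < y) && [forall z : P, ~~ ((x < z) && (z < y))].

Definition maxchain (x y : P) (c : seq P) : bool :=
  match c with
  | [::] => false
  | x0 :: s => [&& x0 == x, path cover x0 s & last x0 s == y]
  end.

Definition graded (bot : P) : Prop :=
  exists rk : P -> nat, rk bot = 0%N /\ forall x y, cover x y -> rk y = (rk x).+1.

Context {d' : Order.disp_t} {L : porderType d'} (lam : P -> P -> L).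

Definition labels (c : seq P) : seq L :=
  match c with [::] => [::] | x0 :: s => pairmap lam x0 s end.

Definition ER_labeling : Prop :=
  forall x y : P, x <= y ->
    exists! c : seq P, maxchain x y c && sorted <%O (labels c).

Definition switching (bot : P) : Prop :=
  forall s : seq P, path cover bot s ->
  forall i : nat, (0 < i)%N -> (i < size s)%N ->
    let c := bot :: s in
    let a := nth bot c i.-1 in let b := nth bot c i in let e := nth bot c i.+1 in
    lam a b < lam b e ->
    exists! b' : P, [/\ cover a b', cover b' e, lam a b' = lam b e & lam b' e = lam a b].

(* quadratic exchange U_i (positions 0..l of the chain [:: x_0; ...; x_l]) *)
Definition U (i : nat) (c : seq P) : seq P :=
  match c with
  | [::] => [::]
  | x0 :: _ =>
    let a := nth x0 c i.-1 in let b := nth x0 c i in let e := nth x0 c i.+1 in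
    if [&& (0 < i)%N, (i.+1 < size c)%N & lam a b < lam b e] then
      match [pick z : P | [&& cover a z, cover z e, lam a z == lam b e & lam z e == lam a b]] with
      | Some z => set_nth x0 c i z
      | None => c
      end
    else c
  end.

Definition qstep (x y : P) (c1 c2 : seq P) : Prop :=
  maxchain x y c1 /\ maxchain x y c2 /\ exists i, c2 = U i c1 \/ c1 = U i c2.

Definition lam_equiv (x y : P) (c1 c2 : seq P) : Prop :=
  [/\ maxchain x y c1, maxchain x y c2 & clos_refl_trans (seq P) (qstep x y) c1 c2].

Definition braid : Prop :=
  forall (x y : P) (c : seq P) (i : nat), maxchain x y c ->
  (0 < i)%N -> (i.+2 < size c)%N ->
  let z i := nth x c i in
  lam (z i.-1) (z i) < lam (z i) (z i.+1) ->
  lam (z i) (z i.+1) < lam (z i.+1) (z i.+2) ->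
  U i (U i.+1 (U i c)) = U i.+1 (U i (U i.+1 c)).

Definition cancellative : Prop :=
  forall (z x y : P), z < x -> x < y ->
  forall c c1 c2 : seq P, maxchain z x c -> maxchain x y c1 -> maxchain x y c2 ->
  lam_equiv z y (c ++ behead c1) (c ++ behead c2) -> lam_equiv x y c1 c2.

(* ---- The poset Q_lambda(P); its elements (classes) are represented by
        representative chains, equality of classes being [clsrel]. ---- *)
Variable bot : P.

Definition inC (c : seq P) : bool :=
  match c with [::] => false | x0 :: s => (x0 == bot) && path cover x0 s end.

Definition clsrel (c1 c2 : seq P) : Prop :=
  [/\ inC c1, inC c2, last bot c1 = last bot c2 & lam_equiv bot (last bot c1) c1 c2].

Definition Qle0 (c e : seq P) : Prop :=
  [/\ inC c, inC e & exists c' e', [/\ clsrel c c', clsrel e e' & {subset c' <= e'}]].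

Definition Qle (c e : seq P) : Prop := clos_trans (seq P) Qle0 c e.
Definition Qlt (c e : seq P) : Prop := Qle c e /\ ~ clsrel c e.
Definition Qcover (c e : seq P) : Prop :=
  Qlt c e /\ ~ (exists f, inC f /\ Qlt c f /\ Qlt f e).

Definition mdiff (s t : seq L) : seq L := foldl (fun acc l => rem l acc) s t.

(* lambda^*(X <. Y) = S(Y) \ S(X), when this is a single label *)
Definition lamstar (c e : seq P) : option L :=
  match mdiff (labels e) (labels c) with
  | [:: l] => if perm_eq (labels e) (l :: labels c) then Some l else None
  | _ => None
  end.

Definition Qmaxchain (X Y : seq P) (cs : seq (seq P)) : Prop :=
  [/\ (0 < size cs)%N, clsrel X (nth [::] cs 0), clsrel Y (last [::] cs)
    & forall j, (j.+1 < size cs)%N -> Qcover (nth [::] cs j) (nth [::] cs j.+1)].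

Definition Qascent_free (cs : seq (seq P)) : Prop :=
  forall j, (j.+2 < size cs)%N -> forall l1 l2 : L,
    lamstar (nth [::] cs j) (nth [::] cs j.+1) = Some l1 ->
    lamstar (nth [::] cs j.+1) (nth [::] cs j.+2) = Some l2 -> ~ (l1 < l2).

Definition ER_star : Prop :=
  forall X Y : seq P, inC X -> inC Y -> Qle X Y ->
    (exists cs, Qmaxchain X Y cs /\ Qascent_free cs) /\
    (forall cs cs', Qmaxchain X Y cs -> Qascent_free cs ->
                    Qmaxchain X Y cs' -> Qascent_free cs' ->
       size cs = size cs' /\ forall j, (j < size cs)%N -> clsrel (nth [::] cs j) (nth [::] cs' j)).

End ChainDefs.

(* Quadratic exchanges at ascents turn an ascent of the label word into a
   descent, so they increase its number of inversions and rewriting a chain at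
   its ascents terminates.  Exchanges at distant positions commute and the braid
   relation joins exchanges at adjacent positions, so by Newman's lemma every
   maximal chain has a unique ascent-free form, shared by all ~_lambda-equivalent
   chains.
   A class Y lies above X in Q_lambda(P) iff Y is the class of X extended by a
   maximal chain t of [top X, top Y]; covers add one element, whose edge label is
   the lambda^* label.  So maximal chains of [X, Y] are read off from such
   extensions t, ascent-free ones from ascent-free t.  Normalising any t gives
   existence.  For uniqueness, two ascent-free t, t' with X.t ~ X.t' are
   ~_lambda-equivalent by the cancellative property, hence equal. *)

From Pilot Require Import Defs.
From mathcomp Require Import all_boot all_order zify.
From Stdlib Require Import Relations.
Import Order.Theory.
Set Implicit Arguments. Unset Strict Implicit. Unset Printing Implicit Defensive.

Lemma clos_rt_map (T U : Type) (R : relation T) (R' : relation U) (f : T -> U) a b :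
  (forall u v, R u v -> clos_refl_trans U R' (f u) (f v)) ->
  clos_refl_trans T R a b -> clos_refl_trans U R' (f a) (f b).
Proof.
move=> H; elim => [u v /H //|u|u v w _ IH1 _ IH2]; first exact: rt_refl.
exact: rt_trans IH1 IH2.
Qed.

Section Newman.
Variables (T : Type) (R : relation T) (mu : T -> nat).
Local Notation "R*" := (clos_refl_trans T R).

Definition irreducible (x : T) := forall y, ~ R x y.

Hypothesis R_decreasing : forall x y, R x y -> mu y < mu x.
Hypothesis R_progress : forall x, irreducible x \/ exists y, R x y.
Hypothesis R_locally_confluent :
  forall x y1 y2, R x y1 -> R x y2 -> exists2 z, R* y1 z & R* y2 z.

Lemma normal_form_exists x : exists2 n, R* x n & irreducible n.
Proof.
have [k] := ubnP (mu x); elim: k x => // k IH x ltxk.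
have [irr_x | [y Rxy]] := R_progress x; first by exists x => //; apply: rt_refl.
have [n Ryn irr_n] := IH y (leq_trans (R_decreasing Rxy) ltxk).
by exists n => //; apply: rt_trans Ryn; apply: rt_step.
Qed.

Lemma irreducible_rt x y : irreducible x -> R* x y -> y = x.
Proof.
move=> irr_x /clos_rt_rt1n_iff Rxy.
by case: Rxy irr_x => // y' z Rxy' _ /(_ y').
Qed.

Lemma normal_form_unique x n1 n2 :
  R* x n1 -> R* x n2 -> irreducible n1 -> irreducible n2 -> n1 = n2.
Proof.
have [k] := ubnP (mu x); elim: k x n1 n2 => // k IH x n1 n2 ltxk.
move=> /clos_rt_rt1n_iff Rxn1 Rxn2 irr1 irr2.
case: Rxn1 irr1 => [|y1 m1 Rxy1 /clos_rt_rt1n_iff Ry1n1] irr1.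
  by rewrite (irreducible_rt irr1 Rxn2).
case/clos_rt_rt1n_iff: Rxn2 irr2 => [|y2 m2 Rxy2 /clos_rt_rt1n_iff Ry2n2] irr2.
  by have := irr2 _ Rxy1.
have [z Ry1z Ry2z] := R_locally_confluent Rxy1 Rxy2.
have [n Rzn irr_n] := normal_form_exists z.
have lt1 := leq_trans (R_decreasing Rxy1) ltxk.
have lt2 := leq_trans (R_decreasing Rxy2) ltxk.
rewrite (IH y1 m1 n lt1 Ry1n1 (rt_trans _ _ _ _ _ Ry1z Rzn) irr1 irr_n).
exact: (IH y2 n m2 lt2 (rt_trans _ _ _ _ _ Ry2z Rzn) Ry2n2 irr_n irr2).
Qed.

Lemma irreducible_conv_eq x y :
  clos_refl_sym_trans T R x y -> irreducible x -> irreducible y -> x = y.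
Proof.
move=> Cxy irr_x irr_y.
suff same_nf n : irreducible n -> (R* x n <-> R* y n).
  by apply: (irreducible_rt irr_y); apply/(same_nf x irr_x); apply: rt_refl.
move=> irr_n; elim: Cxy {irr_x irr_y} => [u v Ruv|u|u v _ IH|u v w _ IH1 _ IH2].
- have Ruv' := rt_step _ _ _ _ Ruv.
  split=> [Run|Rvn]; last exact: rt_trans _ _ _ _ _ Ruv' Rvn.
  have [m Rvm irr_m] := normal_form_exists v.
  by rewrite (normal_form_unique Run (rt_trans _ _ _ _ _ Ruv' Rvm) irr_n irr_m).
- by [].
- exact: iff_sym.
- exact: iff_trans IH1 IH2.
Qed.

End Newman.

Section SaturatedChains.
Context {d : Order.disp_t} {P : finPOrderType d}.
Implicit Types (x y z : P) (s t c e : seq P).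

Definition saturated c := if c is x0 :: s then path Defs.cover x0 s else false.

Lemma cover_lt x y : Defs.cover x y -> (x < y)%O.
Proof. by case/andP. Qed.

Lemma path_cover_lt x s : path Defs.cover x s -> path <%O x s.
Proof. by apply: sub_path => y z /cover_lt. Qed.

Lemma path_cover_min x s y : path Defs.cover x s -> y \in s -> (x < y)%O.
Proof.
move=> /path_cover_lt /(order_path_min (@lt_trans _ _)) /allP; exact.
Qed.

Lemma path_cover_notin x s : path Defs.cover x s -> x \notin s.
Proof. by move=> xs; apply/negP => /(path_cover_min xs); rewrite ltxx. Qed.

Lemma maxchainE z x y c : maxchain x y c = [&& saturated c, head z c == x & last z c == y].
Proof. by case: c => //= x0 s; rewrite andbCA. Qed.

Lemma maxchain_saturated x y c : maxchain x y c -> saturated c.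
Proof. by case: c => // x0 s /and3P []. Qed.

Lemma maxchain_lt x y c : maxchain x y c -> x != y -> (x < y)%O.
Proof.
case: c => // x0 [|y' s] /and3P [/eqP -> xs /eqP <-]; first by rewrite eqxx.
by move=> _; apply: path_cover_min xs (mem_last _ _).
Qed.

Lemma maxchain_xx x c : maxchain x x c -> c = [:: x].
Proof.
case: c => // x0 [|y s] /and3P [/eqP -> // xs /eqP xx].
by have := path_cover_min xs (mem_last y s); rewrite [last _ _]xx ltxx.
Qed.

Lemma maxchain_cat x y c t :
  maxchain x y c -> path Defs.cover y t -> maxchain x (last y t) (c ++ t).
Proof.
case: c => // x0 s /and3P [/eqP -> xs /eqP ys] yt /=.
by rewrite eqxx cat_path xs ys yt last_cat ys eqxx.
Qed.

Lemma subset_path_prefix x s t :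
  path Defs.cover x s -> path Defs.cover x t -> {subset s <= t} -> exists u, t = s ++ u.
Proof.
elim: s x t => [|y s IH] x t; first by exists t.
move=> /= /andP [xy ys]; case: t => [|y' t] xt sub.
  by have := sub y; rewrite inE eqxx => /(_ isT).
move: xt => /= /andP [xy' y't].
have yy' : y = y'.
  have := sub y; rewrite !inE eqxx => /(_ isT) /orP [/eqP //| yt].
  move: xy => /andP [_ /forallP /(_ y')].
  by rewrite (cover_lt xy') (path_cover_min y't yt).
subst y'; have [u ->] : exists u, t = s ++ u.
  apply: (IH y) => // z zs; have := sub z; rewrite !inE zs orbT => /(_ isT).
  by case/orP => // /eqP yz; move: (path_cover_notin ys); rewrite -yz zs.
by exists u.
Qed.

Variable bot : P.

Lemma inC_maxchain c : inC bot c = maxchain bot (last bot c) c.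
Proof. by case: c => //= x s; rewrite eqxx andbT. Qed.

Lemma inC_neq0 c : inC bot c -> c != [::].
Proof. by case: c. Qed.

Lemma inC_cat c t : inC bot c -> inC bot (c ++ t) = path Defs.cover (last bot c) t.
Proof. by case: c => // x0 s /andP [/eqP -> bs] /=; rewrite eqxx cat_path bs. Qed.

Lemma inC_catl c t : c != [::] -> inC bot (c ++ t) -> inC bot c.
Proof. by case: c => // x0 s _ /= /andP [-> ]; rewrite cat_path => /andP []. Qed.

Lemma inC_last_bot c : inC bot c -> last bot c = bot -> c = [:: bot].
Proof. by rewrite inC_maxchain => + cb; rewrite cb; apply: maxchain_xx. Qed.

Lemma inC_subset_prefix c e :
  inC bot c -> inC bot e -> {subset c <= e} -> exists t, e = c ++ t.
Proof.
case: c => // c0 s /andP [/eqP -> bs]; case: e => // e0 t /andP [/eqP -> bt] sub.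
have [u ->] : exists u, t = s ++ u.
  apply: (subset_path_prefix bs bt) => y ys; have := sub y; rewrite !inE ys orbT.
  by case/(_ isT)/orP => // /eqP yb; move: (path_cover_notin bs); rewrite -yb ys.
by exists u.
Qed.

Lemma maxchain_glue c y a :
  inC bot c -> maxchain (last bot c) y a -> maxchain bot y (c ++ behead a).
Proof.
case: c => // x0 s /andP [/eqP -> bs]; case: a => // a0 a /and3P [/eqP /= a0s a0a /eqP ay].
by rewrite /= eqxx cat_path bs -a0s a0a last_cat -a0s ay eqxx.
Qed.

End SaturatedChains.

Section LabelWords.
Context {d' : Order.disp_t} {L : porderType d'}.

Fixpoint inversions (s : seq L) : nat :=
  if s is x :: s' then count (fun y => (y < x)%O) s' + inversions s' else 0.

Lemma inversions_swap (s t : seq L) (a b : L) : (a < b)%O ->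
  inversions (s ++ a :: b :: t) < inversions (s ++ b :: a :: t).
Proof.
move=> ab; elim: s => [|x s IH] /=; last by rewrite !count_cat /=; lia.
by rewrite ab lt_gtF //=; lia.
Qed.

Lemma inversions_le (s : seq L) : inversions s <= size s * size s.
Proof.
elim: s => //= x s IH; have := count_size (fun y => (y < x)%O) s.
move: (count _ _) (inversions s) (size s) IH => a b n; nia.
Qed.

Lemma perm_mdiff (s t u : seq L) : perm_eq s (t ++ u) -> perm_eq (mdiff s t) u.
Proof.
elim: t s => [|x t IH] s //= st; apply: IH.
have xs : x \in s by rewrite (perm_mem st) inE eqxx.
by rewrite -(perm_cons x) (perm_trans _ st) // perm_sym perm_to_rem.
Qed.

End LabelWords.

Section QuadraticExchange.
Context {d : Order.disp_t} {P : finPOrderType d} {d' : Order.disp_t} {L : porderType d'}.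
Variables (lam : P -> P -> L) (bot : P).
Implicit Types (x y z : P) (s t c e : seq P).
Local Notation U := (Defs.U lam).
Local Notation labels := (Defs.labels lam).

Local Notation hdc c := (head bot c).
Definition nthc c k := nth (hdc c) c k.
Definition label c k := lam (nthc c k) (nthc c k.+1).
Definition ascent c i := [&& 0 < i, i.+1 < size c & (label c i.-1 < label c i)%O].
Definition ascent_free c := forall i, ~~ ascent c i.
Definition switch_pick x y z := [pick w : P |
  [&& Defs.cover x w, Defs.cover w z, lam x w == lam y z & lam w z == lam x y]].

Lemma UE i c : U i c =
  if ascent c i then
    if switch_pick (nthc c i.-1) (nthc c i) (nthc c i.+1) is Some z
    then set_nth (hdc c) c i z else c
  else c.
Proof. by case: c => [|x0 s] //; case: i. Qed.

Lemma U_id i c : ~~ ascent c i -> U i c = c.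
Proof. by rewrite UE => /negbTE ->. Qed.

Lemma ascent_bounds c i : ascent c i -> 0 < i /\ i.+1 < size c.
Proof. by case/and3P. Qed.

Lemma hdc_set_nth c i z : 0 < i -> hdc (set_nth (hdc c) c i z) = hdc c.
Proof. by case: c => [|x s]; case: i. Qed.

Lemma nthc_set_nth c i z k : 0 < i ->
  nthc (set_nth (hdc c) c i z) k = if k == i then z else nthc c k.
Proof. by move=> i0; rewrite /nthc hdc_set_nth // nth_set_nth /=; case: eqP. Qed.

Lemma label_set_nth c i z k : 0 < i -> k != i -> k.+1 != i ->
  label (set_nth (hdc c) c i z) k = label c k.
Proof. by move=> i0 ki k1i; rewrite /label !nthc_set_nth // (negbTE ki) (negbTE k1i). Qed.

Lemma triple_decomp c i : 0 < i -> i.+1 < size c ->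
  c = take i.-1 c ++ [:: nthc c i.-1, nthc c i, nthc c i.+1 & drop i.+2 c].
Proof.
case: i => // j _ ltc /=; rewrite -{1}(cat_take_drop j c); congr (_ ++ _).
rewrite /nthc (drop_nth (hdc c)); last by lia.
rewrite (drop_nth (hdc c)); last by lia.
by rewrite (drop_nth (hdc c)); last by lia.
Qed.

Lemma set_nth_triple_decomp c i z : 0 < i -> i.+1 < size c ->
  set_nth (hdc c) c i z = take i.-1 c ++ [:: nthc c i.-1, z, nthc c i.+1 & drop i.+2 c].
Proof.
case: i => // j _ ltc /=; rewrite set_nthE ifT; last by lia.
by rewrite (take_nth (hdc c)) 1?(drop_nth (hdc c)) ?cat_rcons //; lia.
Qed.

Lemma saturated_cat3 s x y z t : saturated (s ++ [:: x, y, z & t]) =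
  [&& saturated (rcons s x), Defs.cover x y, Defs.cover y z & path Defs.cover z t].
Proof.
case: s => [|x0 s] /=; first by rewrite !andbA.
by rewrite -cat_rcons cat_path last_rcons.
Qed.

Lemma labels_cat3 s x y z t : labels (s ++ [:: x, y, z & t]) =
  labels (rcons s x) ++ [:: lam x y, lam y z & labels (z :: t)].
Proof. by case: s => [|x0 s] //=; rewrite -cat_rcons pairmap_cat last_rcons. Qed.

Hypothesis bot_min : forall x : P, (bot <= x)%O.
Hypothesis lam_ER : ER_labeling lam.
Hypothesis lam_switching : switching lam bot.

Lemma path_from_bot x : exists2 s, path Defs.cover bot s & last bot s = x.
Proof.
have [[|x0 s] [/andP [+ _] _]] := lam_ER (bot_min x) => //.
by case/and3P => /eqP -> bs /eqP sx; exists s.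
Qed.

(* The switching property is stated for chains from [bot]; every saturated chain
   extends downwards to such a chain. *)
Lemma switching_saturated c i : saturated c -> 0 < i -> i.+1 < size c ->
  (label c i.-1 < label c i)%O ->
  exists w, [&& Defs.cover (nthc c i.-1) w, Defs.cover w (nthc c i.+1),
                lam (nthc c i.-1) w == label c i & lam w (nthc c i.+1) == label c i.-1].
Proof.
case: c => // x0 s x0s i0 ltc; rewrite /label prednK //.
have [sb bsb sbx0] := path_from_bot x0.
pose n := size (belast bot sb).
have E : bot :: sb ++ s = belast bot sb ++ x0 :: s by rewrite -cat_cons lastI sbx0 cat_rcons.
have nthE k : k < size (x0 :: s) -> nth bot (bot :: sb ++ s) (n + k) = nthc (x0 :: s) k.
  by move=> ltk; rewrite E nth_cat ltnNge leq_addr /= addKn (set_nth_default x0).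
have bs' : path Defs.cover bot (sb ++ s) by rewrite cat_path bsb sbx0.
have n_i0 : 0 < n + i by rewrite addn_gt0 i0 orbT.
have n_lt : n + i < size (sb ++ s) by rewrite size_cat /n size_belast; move: ltc => /=; lia.
have n_pred : (n + i).-1 = n + i.-1 by lia.
have := lam_switching bs' n_i0 n_lt => /=.
rewrite -[nth bot (sb ++ s) _]/(nth bot (bot :: sb ++ s) (n + i).+1) -addnS n_pred.
rewrite !nthE; try by move: ltc => /=; lia.
move=> sw /sw [w [[c1 c2 e1 e2] _]]; exists w.
by rewrite c1 c2 e1 e2 !eqxx.
Qed.

Lemma U_ascent c i : saturated c -> ascent c i -> exists z,
  [/\ U i c = set_nth (hdc c) c i z, Defs.cover (nthc c i.-1) z, Defs.cover z (nthc c i.+1),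
      lam (nthc c i.-1) z = label c i & lam z (nthc c i.+1) = label c i.-1].
Proof.
case: i => // j sat_c asc_j; have /and3P [_ ltc lt_lab] := asc_j.
rewrite UE asc_j /switch_pick.
case: pickP => [z /and4P [c1 c2 /eqP e1 /eqP e2]|none]; first by exists z.
have [w] := switching_saturated sat_c (ltn0Sn j) ltc lt_lab.
by rewrite none.
Qed.

Lemma U_preserves c i : saturated c ->
  [/\ size (U i c) = size c, hdc (U i c) = hdc c, last bot (U i c) = last bot c,
      saturated (U i c) & perm_eq (labels (U i c)) (labels c)].
Proof.
move=> sat_c; case asc_i: (ascent c i); last by rewrite U_id ?asc_i.
have [z [-> c1 c2 e1 e2]] := U_ascent sat_c asc_i.
have [i0 ltc] := ascent_bounds asc_i.
have Ec := triple_decomp i0 ltc; have Ez := set_nth_triple_decomp z i0 ltc.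
split.
- by rewrite size_set_nth; apply/maxn_idPr/ltnW.
- exact: hdc_set_nth.
- by rewrite Ez [in RHS]Ec !last_cat.
- by move: sat_c; rewrite Ez {1}Ec !saturated_cat3 c1 c2 => /and4P [-> _ _ ->].
- rewrite Ez [in X in perm_eq _ X]Ec !labels_cat3 e1 e2 perm_cat2l /label prednK //.
  by apply/permP => f /=; rewrite addnCA.
Qed.

Lemma saturated_U c i : saturated c -> saturated (U i c).
Proof. by move=> sat_c; have [] := U_preserves i sat_c. Qed.

Lemma labels_U_swap c i : saturated c -> ascent c i -> exists (w w' : seq L) (a b : L),
  [/\ (a < b)%O, labels c = w ++ a :: b :: w' & labels (U i c) = w ++ b :: a :: w'].
Proof.
move=> sat_c asc_i; have [z [-> _ _ e1 e2]] := U_ascent sat_c asc_i.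
have [i0 ltc] := ascent_bounds asc_i.
exists (labels (rcons (take i.-1 c) (nthc c i.-1))), (labels (nthc c i.+1 :: drop i.+2 c)).
exists (label c i.-1), (label c i); split; first by case/and3P: asc_i.
- by rewrite {1}(triple_decomp i0 ltc) labels_cat3 /label prednK.
- by rewrite set_nth_triple_decomp // labels_cat3 e1 e2 /label prednK.
Qed.

Definition ascent_step c e := saturated c /\ exists2 i, ascent c i & e = U i c.
Definition exchange_measure c := size c * size c - inversions (labels c).
Local Notation "R*" := (clos_refl_trans (seq P) ascent_step).

Lemma size_labels c : size (labels c) <= size c.
Proof. by case: c => //= x s; rewrite size_pairmap. Qed.

Lemma ascent_step_measure c e : ascent_step c e -> exchange_measure e < exchange_measure c.
Proof.
move=> [sat_c [i asc_i ->]].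
have [w [w' [a [b [ab Ec EU]]]]] := labels_U_swap sat_c asc_i.
have [size_U _ _ _ _] := U_preserves i sat_c.
have := inversions_swap w w' ab; rewrite -Ec -EU.
have := inversions_le (labels (U i c)); have := size_labels (U i c).
rewrite /exchange_measure size_U.
move: (inversions (labels c)) (inversions (labels (U i c))) (size (labels (U i c))) => m n k.
nia.
Qed.

Lemma ascent_step_progress c : irreducible ascent_step c \/ exists e, ascent_step c e.
Proof.
have [sat_c|] := boolP (saturated c); last by move=> /negP nsat; left => e [].
have [/hasP [i _ asc_i]|no_asc] := boolP (has (ascent c) (iota 0 (size c))).
  by right; exists (U i c); split => //; exists i.
left => e [_ [i asc_i _]]; move/hasP: no_asc; apply; exists i => //.
by rewrite mem_iota add0n; have [_] := ascent_bounds asc_i; lia.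
Qed.

Lemma ascent_free_irreducible c : ascent_free c -> irreducible ascent_step c.
Proof. by move=> af e [_ [i asc_i _]]; have := af i; rewrite asc_i. Qed.

Lemma irreducible_ascent_free c : saturated c -> irreducible ascent_step c -> ascent_free c.
Proof. by move=> sat_c irr i; apply/negP => asc_i; apply: (irr (U i c)); split => //; exists i. Qed.

Lemma ascent_set_nth c i z j : 0 < i -> i < size c -> (i.+1 < j) || (j.+1 < i) ->
  ascent (set_nth (hdc c) c i z) j = ascent c j.
Proof.
move=> i0 ltc far; rewrite /ascent size_set_nth (maxn_idPr ltc).
case: j far => [|j] far //=; rewrite !label_set_nth //; lia.
Qed.

Lemma U_set_nth_far c i z j : 0 < i -> i < size c -> (i.+1 < j) || (j.+1 < i) ->
  U j (set_nth (hdc c) c i z) =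
  if ascent c j then
    if switch_pick (nthc c j.-1) (nthc c j) (nthc c j.+1) is Some w
    then set_nth (hdc c) (set_nth (hdc c) c i z) j w else set_nth (hdc c) c i z
  else set_nth (hdc c) c i z.
Proof.
move=> i0 ltc far; rewrite UE ascent_set_nth // !nthc_set_nth // hdc_set_nth //.
by rewrite ifN_eq 1?ifN_eq 1?ifN_eq //; lia.
Qed.

Lemma U_commute c i j : ascent c i -> ascent c j -> i.+1 < j -> U j (U i c) = U i (U j c).
Proof.
move=> asc_i asc_j ij.
have [i0 /ltnW ltci] := ascent_bounds asc_i; have [j0 /ltnW ltcj] := ascent_bounds asc_j.
have far_ij : (i.+1 < j) || (j.+1 < i) by rewrite ij.
have far_ji : (j.+1 < i) || (i.+1 < j) by rewrite ij orbT.
rewrite (UE i c) (UE j c) asc_i asc_j.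
case Ei: (switch_pick (nthc c i.-1) (nthc c i) (nthc c i.+1)) => [z|];
case Ej: (switch_pick (nthc c j.-1) (nthc c j) (nthc c j.+1)) => [w|].
- rewrite !U_set_nth_far // asc_i asc_j Ei Ej set_set_nth ifN_eq //.
  by rewrite neq_ltn (ltn_trans (ltnSn i) ij).
- by rewrite U_set_nth_far // asc_j Ej UE asc_i Ei.
- by rewrite U_set_nth_far // asc_i Ei UE asc_j Ej.
- by rewrite UE asc_j Ej UE asc_i Ei.
Qed.

Lemma rt_U c i : saturated c -> R* c (U i c).
Proof.
move=> sat_c; case asc_i: (ascent c i); last by rewrite U_id ?asc_i //; apply: rt_refl.
by apply: rt_step; split => //; exists i.
Qed.

Lemma rt_UU c i j : saturated c -> R* c (U j (U i c)).
Proof. by move=> sat_c; apply: rt_trans (rt_U i sat_c) (rt_U j (saturated_U i sat_c)). Qed.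

Hypothesis lam_braid : braid lam.

Lemma braid_join c i : saturated c -> ascent c i -> ascent c i.+1 ->
  exists2 e, R* (U i c) e & R* (U i.+1 c) e.
Proof.
case: i => // i sat_c /and3P [_ _ lt1] /and3P [_ ltc lt2].
have c_max : maxchain (hdc c) (last bot c) c by rewrite (maxchainE bot) sat_c !eqxx.
exists (U i.+1 (U i.+2 (U i.+1 c))); first exact/rt_UU/saturated_U.
by rewrite (lam_braid c_max (ltn0Sn i) ltc lt1 lt2); apply/rt_UU/saturated_U.
Qed.

Lemma ascent_join c i j : saturated c -> ascent c i -> ascent c j -> i < j ->
  exists2 e, R* (U i c) e & R* (U j c) e.
Proof.
move=> sat_c asc_i asc_j ij; case: (ltngtP i.+1 j) => [far|ji|Ej].
- exists (U j (U i c)); first exact/rt_U/saturated_U.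
  by rewrite U_commute //; apply/rt_U/saturated_U.
- by move: ji; rewrite ltnS leqNgt ij.
- by rewrite -Ej in asc_j *; apply: braid_join.
Qed.

Lemma ascent_step_locally_confluent c c1 c2 :
  ascent_step c c1 -> ascent_step c c2 -> exists2 e, R* c1 e & R* c2 e.
Proof.
move=> [sat_c [i asc_i ->]] [_ [j asc_j ->]]; case: (ltngtP i j) => [ij|ji|<-].
- exact: ascent_join.
- by have [e ? ?] := ascent_join sat_c asc_j asc_i ji; exists e.
- by exists (U i c); apply: rt_refl.
Qed.

Local Notation lam_equiv := (lam_equiv lam).
Local Notation qstep := (qstep lam).

Lemma qstep_cases x y a b : qstep x y a b -> [\/ a = b, ascent_step a b | ascent_step b a].
Proof.
move=> [a_max [b_max [i [->|->]]]].
- case asc_i: (ascent a i); last by apply: Or31; rewrite U_id ?asc_i.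
  by apply: Or32; split; [exact: maxchain_saturated a_max | exists i].
- case asc_i: (ascent b i); last by apply: Or31; rewrite U_id ?asc_i.
  by apply: Or33; split; [exact: maxchain_saturated b_max | exists i].
Qed.

Lemma lam_equiv_conv x y a b : lam_equiv x y a b -> clos_refl_sym_trans _ ascent_step a b.
Proof.
move=> [_ _]; elim=> [u v /qstep_cases [->|uv|vu]|u|u v w _ IHuv _ IHvw].
- exact: rst_refl.
- exact: rst_step.
- by apply: rst_sym; apply: rst_step.
- exact: rst_refl.
- exact: rst_trans IHuv IHvw.
Qed.

Lemma lam_equiv_ascent_free_eq x y a b :
  lam_equiv x y a b -> ascent_free a -> ascent_free b -> a = b.
Proof.
move=> /lam_equiv_conv ab /ascent_free_irreducible irr_a /ascent_free_irreducible irr_b.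
exact: (irreducible_conv_eq ascent_step_measure ascent_step_progress
          ascent_step_locally_confluent ab irr_a irr_b).
Qed.

Lemma qstep_of_ascent_step x y a b :
  maxchain x y a -> ascent_step a b -> maxchain x y b /\ qstep x y a b.
Proof.
move=> a_max [sat_a [i asc_i ->]]; have [_ hd_U last_U sat_U _] := U_preserves i sat_a.
have b_max : maxchain x y (U i a).
  by move: a_max; rewrite !(maxchainE bot) hd_U last_U sat_U => /and3P [_ -> ->].
by split=> //; split=> //; split=> //; exists i; left.
Qed.

Lemma lam_equiv_ascent_free_form x y a :
  maxchain x y a -> exists2 n, lam_equiv x y a n & ascent_free n.
Proof.
move=> a_max; have [n a_n irr_n] :=
  normal_form_exists ascent_step_measure ascent_step_progress a.
suff [n_max a_n'] : maxchain x y n /\ clos_refl_trans _ (qstep x y) a n.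
  by exists n => //; apply: irreducible_ascent_free (maxchain_saturated n_max) irr_n.
elim: a_n a_max {irr_n} => [u v uv|u|u v w _ IHuv _ IHvw] u_max.
- by have [v_max uv'] := qstep_of_ascent_step u_max uv; split => //; apply: rt_step.
- by split => //; apply: rt_refl.
- have [v_max uv] := IHuv u_max; have [w_max vw] := IHvw v_max.
  by split => //; apply: rt_trans uv vw.
Qed.

Lemma lam_equiv_refl x y a : maxchain x y a -> lam_equiv x y a a.
Proof. by split => //; apply: rt_refl. Qed.

Lemma lam_equiv_sym x y a b : lam_equiv x y a b -> lam_equiv x y b a.
Proof.
move=> [a_max b_max ab]; split => //; elim: ab {a_max b_max} => [u v uv|u|u v w _ vu _ wv].
- apply: rt_step; have [u_max [v_max [i vu]]] := uv.
  by split=> //; split=> //; exists i; case: vu; [right | left].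
- exact: rt_refl.
- exact: rt_trans wv vu.
Qed.

Lemma lam_equiv_trans x y a b c :
  lam_equiv x y a b -> lam_equiv x y b c -> lam_equiv x y a c.
Proof. by move=> [a_max _ ab] [_ c_max bc]; split => //; apply: rt_trans ab bc. Qed.

Lemma lam_equiv_size_perm x y a b : lam_equiv x y a b ->
  size a = size b /\ perm_eq (labels a) (labels b).
Proof.
move=> [_ _]; elim=> [u v [u_max [v_max [i [->|->]]]]|u|u v w _ [s1 p1] _ [s2 p2]] //.
- by have [-> _ _ _ p] := U_preserves i (maxchain_saturated u_max); rewrite perm_sym.
- by have [-> _ _ _ p] := U_preserves i (maxchain_saturated v_max).
- by split; [rewrite s1 | apply: perm_trans p1 p2].
Qed.

Lemma U_cat c t i : i.+1 < size c -> U i (c ++ t) = U i c ++ t.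
Proof.
move=> ltc; have c0 : c != [::] by case: c ltc.
have hd_ct : hdc (c ++ t) = hdc c by case: c c0 {ltc}.
have nth_ct k : k < size c -> nthc (c ++ t) k = nthc c k by rewrite /nthc hd_ct nth_cat => ->.
have asc_ct : ascent (c ++ t) i = ascent c i.
  by rewrite /ascent /label !nth_ct ?size_cat //; lia.
rewrite !UE asc_ct !nth_ct ?hd_ct; try lia.
case: (ascent c i) => //; case: (switch_pick _ _ _) => // z.
have lti : i < size c := ltnW ltc.
by rewrite !set_nthE size_cat ltn_addr // lti take_cat drop_cat lti ltc -catA.
Qed.

Lemma U_catl s c i : 0 < i -> U (size s + i) (s ++ c) = s ++ U i c.
Proof.
case: i => // i _; case: (ltnP i.+2 (size c)) => ltc; last first.
  have n1 : ~~ ascent c i.+1 by apply/negP => /and3P [_]; rewrite ltnNge ltc.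
  have n2 : ~~ ascent (s ++ c) (size s + i.+1).
    by apply/negP => /and3P [_]; rewrite size_cat -addnS ltn_add2l ltnNge ltc.
  by rewrite !U_id.
have nth_sc k : k < size c -> nthc (s ++ c) (size s + k) = nthc c k.
  by move=> ltk; rewrite /nthc nth_cat ltnNge leq_addr /= addKn; apply: set_nth_default.
have asc_sc : ascent (s ++ c) (size s + i.+1) = ascent c i.+1.
  rewrite /ascent /label addnS /= -!addnS !nth_sc ?size_cat ?ltn_add2l //; lia.
rewrite !UE asc_sc addnS /= -!addnS !nth_sc; try lia.
case: (ascent c i.+1) => //; case: (switch_pick _ _ _) => // z.
have lti : i.+1 < size c := ltnW ltc.
rewrite !set_nthE size_cat ltn_add2l lti take_cat drop_cat ltnNge leq_addr /= addKn.
by rewrite -addnS ltnNge leq_addr /= addKn catA.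
Qed.

Lemma qstep_catr x y u v t : path Defs.cover y t -> qstep x y u v ->
  clos_refl_trans _ (qstep x (last y t)) (u ++ t) (v ++ t).
Proof.
move=> yt [u_max [v_max [i uv]]].
have ut_max := maxchain_cat u_max yt; have vt_max := maxchain_cat v_max yt.
have no_asc w : size w <= i.+1 -> ~~ ascent w i.
  by move=> lew; apply/negP => /and3P [_]; rewrite ltnNge lew.
case: uv => E; [rewrite E in vt_max * | rewrite E in ut_max *].
- case: (ltnP i.+1 (size u)) => ltu; last by rewrite (U_id (no_asc u ltu)); apply: rt_refl.
  by apply: rt_step; split=> //; split=> //; exists i; left; rewrite U_cat.
- case: (ltnP i.+1 (size v)) => ltv; last by rewrite (U_id (no_asc v ltv)); apply: rt_refl.
  by apply: rt_step; split=> //; split=> //; exists i; right; rewrite U_cat.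
Qed.

Lemma lam_equiv_catr x y a b t : lam_equiv x y a b -> path Defs.cover y t ->
  lam_equiv x (last y t) (a ++ t) (b ++ t).
Proof.
move=> [a_max b_max ab] yt; split; try exact: maxchain_cat.
by apply: (clos_rt_map (f := fun u => u ++ t)) ab => u v; apply: qstep_catr.
Qed.

Lemma lam_equiv_catl c y a b : inC bot c -> lam_equiv (last bot c) y a b ->
  lam_equiv bot y (c ++ behead a) (c ++ behead b).
Proof.
move=> c_inC [a_max b_max ab]; split; try exact: maxchain_glue.
case: c c_inC a_max b_max ab => // x0 s c_inC a_max b_max ab; set p := belast x0 s.
have glue u : maxchain (last bot (x0 :: s)) y u -> (x0 :: s) ++ behead u = p ++ u.
  by case: u => // u0 u /and3P [/eqP /= -> _ _]; rewrite -cat_cons lastI cat_rcons.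
rewrite !glue //; apply: (clos_rt_map (f := cat p)) ab => u v [u_max [v_max [i uv]]].
have pu_max := maxchain_glue c_inC u_max; have pv_max := maxchain_glue c_inC v_max.
rewrite !glue // in pu_max pv_max.
case: (posnP i) uv => [-> | i0] uv; first by case: uv => ->; rewrite U_id //; apply: rt_refl.
apply: rt_step; split=> //; split=> //; exists (size p + i).
by case: uv => ->; [left | right]; rewrite U_catl.
Qed.

End QuadraticExchange.

Section ClassesOfChains.
Context {d : Order.disp_t} {P : finPOrderType d} {d' : Order.disp_t} {L : porderType d'}.
Variables (lam : P -> P -> L) (bot : P).
Hypothesis bot_min : forall x : P, (bot <= x)%O.
Hypothesis lam_ER : ER_labeling lam.
Hypothesis lam_switching : switching lam bot.
Hypothesis lam_braid : braid lam.
Implicit Types (x y w : P) (a b c t X Y : seq P).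
Local Notation clsrel := (clsrel lam bot).
Local Notation labels := (labels lam).
Local Notation lam_equiv := (lam_equiv lam).

Lemma clsrel_refl c : inC bot c -> clsrel c c.
Proof. by move=> c_inC; split => //; apply: lam_equiv_refl; rewrite -inC_maxchain. Qed.

Lemma clsrel_sym a b : clsrel a b -> clsrel b a.
Proof. by move=> [a_inC b_inC ab /lam_equiv_sym]; rewrite ab; split. Qed.

Lemma clsrel_trans a b c : clsrel a b -> clsrel b c -> clsrel a c.
Proof.
move=> [a_inC _ ab Eab] [_ c_inC bc Ebc]; split => //; first by rewrite ab.
by apply: lam_equiv_trans Eab _; rewrite ab.
Qed.

Lemma clsrel_size_perm a b : clsrel a b -> size a = size b /\ perm_eq (labels a) (labels b).
Proof.
move=> [_ _ _ Eab]; exact: (lam_equiv_size_perm bot_min lam_ER lam_switching Eab).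
Qed.

Lemma clsrel_catr a b t : clsrel a b -> path Defs.cover (last bot a) t -> clsrel (a ++ t) (b ++ t).
Proof.
move=> [a_inC b_inC ab Eab] at_; split.
- by rewrite inC_cat.
- by rewrite inC_cat // -ab.
- by rewrite !last_cat ab.
- by rewrite last_cat; apply: lam_equiv_catr.
Qed.

Lemma clsrel_catl X y a b : inC bot X -> lam_equiv (last bot X) y a b ->
  clsrel (X ++ behead a) (X ++ behead b).
Proof.
move=> X_inC /(lam_equiv_catl X_inC) Eab; have [Xa_max Xb_max _] := Eab.
have [top_a top_b] : last bot (X ++ behead a) = y /\ last bot (X ++ behead b) = y.
  by move: Xa_max Xb_max; rewrite !(maxchainE bot) => /and3P [_ _ /eqP ->] /and3P [_ _ /eqP ->].
by split; rewrite ?inC_maxchain ?top_a ?top_b.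
Qed.

Lemma Qle_ext X Y : Qle lam bot X Y -> inC bot X /\ exists t, clsrel Y (X ++ t).
Proof.
elim=> [c e [c_inC e_inC [c' [e' [cc' ee' sub]]]] | X' Z Y' _ [X_inC [t1 ZX] _ [_ [t2 YZ]]]].
- split => //; have [_ c'_inC cc'_top _] := cc'; have [_ e'_inC _ _] := ee'.
  have [t e't] := inC_subset_prefix c'_inC e'_inC sub; rewrite e't in ee' e'_inC.
  exists t; apply: clsrel_trans ee' _; apply: clsrel_sym; apply: clsrel_catr => //.
  by move: e'_inC; rewrite inC_cat // cc'_top.
- split => //; exists (t1 ++ t2); apply: (clsrel_trans YZ); rewrite catA.
  by apply: clsrel_catr => //; case: YZ => _ /=; rewrite inC_cat //; case: ZX.
Qed.

Lemma Qle_cat X Y t : inC bot X -> clsrel Y (X ++ t) -> Qle lam bot X Y.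
Proof.
move=> X_inC YX; apply: t_step; split => //; first by case: YX.
exists X, (X ++ t); split => //; first exact: clsrel_refl.
by move=> u uX; rewrite mem_cat uX.
Qed.

Lemma Qlt_size X Y : Qlt lam bot X Y -> size X < size Y.
Proof.
move=> [/Qle_ext [X_inC [[|w t] YX]] nXY].
  by case: nXY; apply: clsrel_sym; rewrite cats0 in YX.
by rewrite (clsrel_size_perm YX).1 size_cat addnS ltnS leq_addr.
Qed.

Lemma Qlt_cat X Y t : inC bot X -> clsrel Y (X ++ t) -> t != [::] -> Qlt lam bot X Y.
Proof.
move=> X_inC YX t0; split; first exact: Qle_cat YX.
move=> /clsrel_trans /(_ YX) /clsrel_size_perm [+ _].
by rewrite size_cat -{1}[size X]addn0 => /addnI; case: (t) t0.
Qed.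

Lemma Qcover_ext1 X Y : Qcover lam bot X Y -> inC bot X /\ exists w, clsrel Y (X ++ [:: w]).
Proof.
move=> [[/Qle_ext [X_inC [[|w [|w' t]] YX]] nXY] no_mid]; split => //.
- by case: nXY; apply: clsrel_sym; rewrite cats0 in YX.
- by exists w.
have Xw_inC : inC bot (X ++ [:: w]).
  by apply: (@inC_catl _ _ _ _ [:: w' & t]); [case: (X) | rewrite -catA; case: YX].
case: no_mid; exists (X ++ [:: w]); split; [done | split].
- by apply: (@Qlt_cat _ _ [:: w]) => //; apply: clsrel_refl.
- by apply: (@Qlt_cat _ _ [:: w' & t]) => //; rewrite -catA.
Qed.

Lemma Qcover_rcons X w : inC bot X -> inC bot (X ++ [:: w]) -> Qcover lam bot X (X ++ [:: w]).
Proof.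
move=> X_inC Xw_inC; split; first by apply: (@Qlt_cat _ _ [:: w]) => //; apply: clsrel_refl.
by move=> [e [_ [/Qlt_size lt1 /Qlt_size]]]; rewrite size_cat addn1 ltnS leqNgt lt1.
Qed.

Lemma labels_rcons c w : c != [::] -> labels (rcons c w) = rcons (labels c) (lam (last bot c) w).
Proof. by case: c => // x0 s _ /=; rewrite -cats1 pairmap_cat cats1. Qed.

Lemma lamstar_perm a b l : perm_eq (labels b) (l :: labels a) -> lamstar lam a b = Some l.
Proof.
move=> ba; rewrite /lamstar.
have /perm_mdiff : perm_eq (labels b) (labels a ++ [:: l]).
  by rewrite (perm_trans ba) // cats1 perm_sym perm_rcons.
case: (mdiff _ _) => [|m [|m' r]] ml; try by have := perm_size ml.
have : m \in [:: l] by rewrite -(perm_mem ml) inE.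
by rewrite inE => /eqP ->; rewrite ba.
Qed.

Lemma Qcover_lamstar X Y : Qcover lam bot X Y ->
  [/\ clsrel Y (X ++ [:: last bot Y]), Defs.cover (last bot X) (last bot Y)
    & lamstar lam X Y = Some (lam (last bot X) (last bot Y))].
Proof.
move=> /Qcover_ext1 [X_inC [w YXw]].
have -> : last bot Y = w by case: YXw => _ _ ->; rewrite last_cat.
split => //; first by case: YXw => _; rewrite inC_cat //= andbT.
apply: lamstar_perm; have [_ /perm_trans -> //] := clsrel_size_perm YXw.
by rewrite cats1 (labels_rcons _ (inC_neq0 X_inC)) perm_rcons.
Qed.

Definition tops (cs : seq (seq P)) : seq P := map (last bot) cs.

Lemma Qmaxchain_prefix X Y cs j : Qmaxchain lam bot X Y cs -> j < size cs ->
  clsrel (nth [::] cs j) (X ++ take j (behead (tops cs))).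
Proof.
move=> [_ X_cs0 _ cs_cover]; elim: j => [_|j IH ltj].
  by rewrite take0 cats0; apply: clsrel_sym X_cs0.
have [cs_j1 top_cover _] := Qcover_lamstar (cs_cover j ltj).
have ltj' : j < size (behead (tops cs)) by rewrite size_behead size_map; lia.
apply: (clsrel_trans cs_j1); rewrite (take_nth bot) // nth_behead (nth_map [::]) //.
by rewrite -cats1 catA; apply: clsrel_catr (IH (ltnW ltj)) _; rewrite /= top_cover.
Qed.

Lemma Qmaxchain_tops X Y cs : Qmaxchain lam bot X Y cs ->
  maxchain (last bot X) (last bot Y) (tops cs) /\ clsrel Y (X ++ behead (tops cs)).
Proof.
move=> cs_max; have [cs0 X_cs0 Y_cs _] := cs_max.
have Y_ext : clsrel Y (X ++ behead (tops cs)).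
  apply: (clsrel_trans Y_cs); rewrite -(nth_last [::]).
  have := Qmaxchain_prefix (j := (size cs).-1) cs_max.
  rewrite -(size_map (last bot)) -size_behead take_size; apply.
  by rewrite size_behead size_map prednK.
split => //; have [X_inC _ _ _] := X_cs0; have [_ Xt_inC top_eq _] := Y_ext.
have -> : tops cs = last bot X :: behead (tops cs).
  by case: (cs) cs0 X_cs0 => // c0 cs' _ [_ _ ->].
by rewrite /= eqxx -inC_cat // Xt_inC top_eq last_cat eqxx.
Qed.

Lemma Qascent_free_tops X Y cs : Qmaxchain lam bot X Y cs -> Qascent_free lam cs ->
  ascent_free lam bot (tops cs).
Proof.
move=> [_ _ _ cs_cover] cs_af [|k] //; apply/negP => /and3P [_]; rewrite size_map => ltk.
have [_ _ lam1] := Qcover_lamstar (cs_cover k (ltnW ltk)).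
have [_ _ lam2] := Qcover_lamstar (cs_cover k.+1 ltk).
have top_nth m : m < size cs -> nthc bot (tops cs) m = last bot (nth [::] cs m).
  by move=> ltm; rewrite /nthc (nth_map [::]).
by rewrite /label /= !top_nth ?(ltnW ltk) ?(ltnW (ltnW ltk)) //; apply: cs_af lam1 lam2.
Qed.

Hypothesis lam_cancellative : cancellative lam.

(* [cancellative] requires [bot < last X < y]; the two degenerate cases are direct. *)
Lemma lam_equiv_cancel X y a b : inC bot X ->
  maxchain (last bot X) y a -> maxchain (last bot X) y b ->
  lam_equiv bot y (X ++ behead a) (X ++ behead b) -> lam_equiv (last bot X) y a b.
Proof.
move=> X_inC a_max b_max Eab.
have [X_bot|X_nbot] := eqVneq (last bot X) bot.
  have X1 := inC_last_bot X_inC X_bot; rewrite X_bot in a_max b_max *.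
  have glue u : maxchain bot y u -> X ++ behead u = u.
    by rewrite X1; case: u => // u0 u /and3P [/eqP -> _ _].
  by rewrite -(glue a) // -(glue b).
have [X_y|X_ny] := eqVneq (last bot X) y.
  rewrite X_y in a_max b_max *; rewrite (maxchain_xx a_max) (maxchain_xx b_max).
  by apply: lam_equiv_refl; rewrite /= eqxx.
have bot_X : (bot < last bot X)%O by rewrite lt_neqAle eq_sym X_nbot bot_min.
apply: (lam_cancellative bot_X (maxchain_lt a_max X_ny) _ a_max b_max Eab).
by rewrite -inC_maxchain.
Qed.

Lemma ascent_free_extension_unique X Y a b : inC bot X ->
  maxchain (last bot X) (last bot Y) a -> maxchain (last bot X) (last bot Y) b ->
  clsrel Y (X ++ behead a) -> clsrel Y (X ++ behead b) ->
  ascent_free lam bot a -> ascent_free lam bot b -> a = b.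
Proof.
move=> X_inC a_max b_max Ya Yb a_af b_af.
have [_ _ _ Eab] := clsrel_trans (clsrel_sym Ya) Yb.
have top_Y : last bot (X ++ behead a) = last bot Y by case: Ya.
rewrite top_Y in Eab.
apply: (lam_equiv_ascent_free_eq bot_min lam_ER lam_switching lam_braid _ a_af b_af).
exact: lam_equiv_cancel X_inC a_max b_max Eab.
Qed.

Definition prefix_classes X n : seq (seq P) := mkseq (fun j => X ++ take j (behead n)) (size n).

Lemma size_prefix_classes X n : size (prefix_classes X n) = size n.
Proof. exact: size_mkseq. Qed.

Lemma nth_prefix_classes X n j : j < size n ->
  nth [::] (prefix_classes X n) j = X ++ take j (behead n).
Proof. exact: nth_mkseq. Qed.

Lemma last_prefix X y n j : maxchain (last bot X) y n -> j < size n ->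
  last bot (X ++ take j (behead n)) = nthc bot n j.
Proof.
case: n => // x n /and3P [/eqP /= x_top _ _]; case: j => [|j] ltj.
  by rewrite take0 cats0 x_top.
by rewrite /= (take_nth bot) // -cats1 catA last_cat /= /nthc /= (set_nth_default x).
Qed.

Section Prefixes.
Variables (X Y n : seq P).
Hypotheses (X_inC : inC bot X) (n_max : maxchain (last bot X) (last bot Y) n).
Hypothesis Y_ext : clsrel Y (X ++ behead n).

Lemma inC_prefix j : inC bot (X ++ take j (behead n)).
Proof.
apply: (@inC_catl _ _ _ _ (drop j (behead n))); first by case: (X) X_inC.
by rewrite -catA cat_take_drop; case: Y_ext.
Qed.

Lemma Qcover_prefix j : j.+1 < size n ->
  Qcover lam bot (X ++ take j (behead n)) (X ++ take j.+1 (behead n)).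
Proof.
move=> ltj; have ltj' : j < size (behead n) by rewrite size_behead; lia.
rewrite (take_nth bot) // -cats1 catA; apply: Qcover_rcons; first exact: inC_prefix.
by rewrite -catA cats1 -take_nth // inC_prefix.
Qed.

Lemma Qmaxchain_prefix_classes : Qmaxchain lam bot X Y (prefix_classes X n).
Proof.
have n0 : 0 < size n by case: (n) n_max.
split; rewrite ?size_prefix_classes //.
- by rewrite nth_prefix_classes // take0 cats0; apply: clsrel_refl.
- rewrite -(nth_last [::]) size_prefix_classes nth_prefix_classes ?prednK //.
  by rewrite -size_behead take_size.
- by move=> j ltj; rewrite !nth_prefix_classes ?(ltnW ltj) //; apply: Qcover_prefix.
Qed.

Lemma Qascent_free_prefix_classes : ascent_free lam bot n -> Qascent_free lam (prefix_classes X n).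
Proof.
move=> n_af j; rewrite size_prefix_classes => ltj l1 l2.
rewrite !nth_prefix_classes ?(ltnW ltj) ?(ltnW (ltnW ltj)) //.
have [_ _ ->] := Qcover_lamstar (Qcover_prefix (ltnW ltj)).
have [_ _ ->] := Qcover_lamstar (Qcover_prefix ltj).
rewrite !(last_prefix n_max) ?(ltnW ltj) ?(ltnW (ltnW ltj)) // => -[<-] [<-].
by apply/negP; have := n_af j.+1; rewrite /ascent /label /= ltj.
Qed.

End Prefixes.

Lemma Qinterval_ascent_free_exists X Y : inC bot X -> Qle lam bot X Y ->
  exists cs, Qmaxchain lam bot X Y cs /\ Qascent_free lam cs.
Proof.
move=> X_inC /Qle_ext [_ [t Yt]]; have [_ Xt_inC top_t _] := Yt.
have t_max : maxchain (last bot X) (last bot Y) (last bot X :: t).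
  by rewrite /= eqxx -inC_cat // Xt_inC top_t last_cat eqxx.
have [n tn n_af] := lam_equiv_ascent_free_form bot_min lam_ER lam_switching t_max.
have [_ n_max _] := tn.
have Yn : clsrel Y (X ++ behead n) by apply: clsrel_trans Yt (clsrel_catl X_inC tn).
exists (prefix_classes X n); split.
- exact: (Qmaxchain_prefix_classes X_inC n_max Yn).
- exact: (Qascent_free_prefix_classes X_inC n_max Yn n_af).
Qed.

Lemma Qinterval_ascent_free_unique X Y cs cs' : inC bot X ->
  Qmaxchain lam bot X Y cs -> Qascent_free lam cs ->
  Qmaxchain lam bot X Y cs' -> Qascent_free lam cs' ->
  size cs = size cs' /\ forall j, j < size cs -> clsrel (nth [::] cs j) (nth [::] cs' j).
Proof.
move=> X_inC cs_max cs_af cs'_max cs'_af.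
have [top_max Y_top] := Qmaxchain_tops cs_max; have [top'_max Y_top'] := Qmaxchain_tops cs'_max.
have tops_eq : tops cs = tops cs'.
  apply: ascent_free_extension_unique X_inC top_max top'_max Y_top Y_top' _ _.
  - exact: Qascent_free_tops cs_max cs_af.
  - exact: Qascent_free_tops cs'_max cs'_af.
have size_eq : size cs = size cs' by have := congr1 size tops_eq; rewrite !size_map.
split => // j ltj; apply: clsrel_trans (Qmaxchain_prefix cs_max ltj) _.
by rewrite tops_eq; apply: clsrel_sym; apply: Qmaxchain_prefix cs'_max _; rewrite -size_eq.
Qed.

End ClassesOfChains.

Local Open Scope order_scope.

Theorem proposition3p21 (d : Order.disp_t) (P : finPOrderType d)
  (d' : Order.disp_t) (L : porderType d') (bot : P) (lam : P -> P -> L) :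
  (forall x : P, bot <= x) -> graded bot ->
  ER_labeling lam -> switching lam bot -> braid lam -> cancellative lam ->
  ER_star lam bot.
Proof.
move=> bot_min _ lam_ER lam_switching lam_braid lam_cancellative X Y X_inC _ XY; split.
- exact: Qinterval_ascent_free_exists.
- by move=> cs cs'; apply: Qinterval_ascent_free_unique.
Qed.
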